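(* Let $V$ be a finite set and $\mathcal{F}\subseteq 2^V$ a minimal hereditary family with $\delta(\mathcal{F})\ge 12$. Then every $F\in\mathcal{F}$ satisfies $|F|\le 4$.
   Context: A family $\mathcal{F}\subseteq 2^V$ is hereditary if $F'\subseteq F\in\mathcal{F}$ implies $F'\in\mathcal{F}$. For $x\in V$, $d_{\mathcal{F}}(x)=|\{F\in\mathcal{F}: x\in F\}|$ and $\delta(\mathcal{F})=\min_{x\in V}d_{\mathcal{F}}(x)$. A set $F\in\mathcal{F}$ is maximal if no other member of $\mathcal{F}$ strictly contains it. A hereditary family $\mathcal{F}$ with $\delta(\mathcal{F})\ge 12$ is called minimal if for every maximal $F\in\mathcal{F}$ we have $\delta(\mathcal{F}\setminus\{F\})\le 11$. *)

From mathcomp Require Import all_boot.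
Set Implicit Arguments. Unset Strict Implicit. Unset Printing Implicit Defensive.

Definition hereditary (V : finType) (F : {set {set V}}) : Prop :=
  forall A B : {set V}, A \subset B -> B \in F -> A \in F.

Definition deg (V : finType) (F : {set {set V}}) (x : V) : nat :=
  #|[set A in F | x \in A]|.

Definition mindeg_ge (V : finType) (F : {set {set V}}) (k : nat) : Prop :=
  forall x : V, k <= deg F x.

Definition mindeg_le (V : finType) (F : {set {set V}}) (k : nat) : Prop :=
  exists x : V, deg F x <= k.

Definition maximal_in (V : finType) (F : {set {set V}}) (A : {set V}) : Prop :=
  A \in F /\ forall B : {set V}, B \in F -> A \subset B -> B = A.

Definition minimal12 (V : finType) (F : {set {set V}}) : Prop :=
  [/\ hereditary F, mindeg_ge F 12 &
      forall A : {set V}, maximal_in F A -> mindeg_le (F :\ A) 11].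

From mathcomp Require Import all_boot.

Set Implicit Arguments.
Unset Strict Implicit.
Unset Printing Implicit Defensive.

(* If some member of F had five elements, so would a maximal member B above it.
   Every x in B lies in the 2^(|B|-1) >= 16 sets x ∪ C, C ⊆ B \ x, all in F by
   heredity, so deleting B leaves x of degree at least 15; vertices outside B
   keep their degree. Hence F \ B still has minimum degree at least 12,
   contradicting minimality. *)

Lemma maximal_in_superset (V : finType) (F : {set {set V}}) (A : {set V}) :
  A \in F -> exists2 B, maximal_in F B & A \subset B.
Proof.
move=> AF; have AA : (A \in F) && (A \subset A) by rewrite AF subxx.
case: (@arg_maxnP _ A [pred B | (B \in F) && (A \subset B)] (fun B => #|B|) AA).
move=> B /andP[BF AB] Bmax.
exists B => //; split=> // C CF BC; apply/eqP; rewrite eq_sym eqEcard BC /=.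
by apply: Bmax; rewrite inE CF (subset_trans AB BC).
Qed.

Lemma deg_setD1 (V : finType) (F : {set {set V}}) (B : {set V}) (x : V) :
  deg F x = ((B \in F) && (x \in B)) + deg (F :\ B) x.
Proof.
rewrite /deg; have -> : [set A in F :\ B | x \in A] = [set A in F | x \in A] :\ B.
  by apply/setP => A; rewrite !inE andbA.
by rewrite (cardsD1 B [set A in F | x \in A]) inE.
Qed.

Lemma deg_ge_pow2 (V : finType) (F : {set {set V}}) (B : {set V}) (x : V) :
  hereditary F -> B \in F -> x \in B -> 2 ^ #|B :\ x| <= deg F x.
Proof.
move=> herF BF xB; set S := [set x |: C | C in powerset (B :\ x)].
have cardS : #|S| = 2 ^ #|B :\ x|.
  rewrite card_in_imset ?card_powerset // => C1 C2; rewrite !inE => C1B C2B.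
  have xC (C : {set V}) : C \subset B :\ x -> x \notin C.
    by move=> CB; apply/negP => /(subsetP CB); rewrite !inE eqxx.
  by move=> eqC; rewrite -(setU1K (xC _ C1B)) -(setU1K (xC _ C2B)) eqC.
rewrite -cardS /deg subset_leq_card //; apply/subsetP => A /imsetP[C].
rewrite inE => CB ->{A}; rewrite inE setU11 andbT.
by apply: herF BF; rewrite subUset sub1set xB (subset_trans CB) ?subD1set.
Qed.

Lemma mindeg_ge12_setD1 (V : finType) (F : {set {set V}}) (B : {set V}) :
  hereditary F -> mindeg_ge F 12 -> B \in F -> 4 < #|B| ->
  mindeg_ge (F :\ B) 12.
Proof.
move=> herF degF BF B5 x; case xB: (x \in B).
  have B4 : 4 <= #|B :\ x| by move: B5; rewrite (cardsD1 x) xB.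
  have := leq_trans (leq_pexp2l (isT : 0 < 2) B4) (deg_ge_pow2 herF BF xB).
  rewrite (deg_setD1 _ B) BF xB => deg16.
  by rewrite -(leq_add2l 1); apply: leq_trans deg16.
by have := degF x; rewrite (deg_setD1 _ B) xB andbF.
Qed.

Theorem mainTheorem5 (V : finType) (F : {set {set V}}) :
  minimal12 F -> forall A : {set V}, A \in F -> #|A| <= 4.
Proof.
case=> herF degF minF A AF; rewrite leqNgt; apply/negP => A5.
have [B [BF Bmax] AB] := maximal_in_superset AF.
have B5 : 4 < #|B| := leq_trans A5 (subset_leq_card AB).
have [x degx] := minF B (conj BF Bmax).
by have := mindeg_ge12_setD1 herF degF BF B5 x; rewrite leqNgt ltnS degx.
Qed.
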